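(* Let $(X,d)$ be an ultrametric space and $f:X\to X$ continuous. If any one of the following holds, then $f$ has the finite shadowing property: (i) $f$ is eventually $1$-Lipschitz; (ii) $f$ is invertible and $f^{-1}$ is eventually $1$-Lipschitz; (iii) $f$ is an invertible eventual similarity and $f^{-1}$ is uniformly continuous.
   Context: An ultrametric space satisfies $d(x,z)\le\max\{d(x,y),d(y,z)\}$. A map $g$ is eventually $1$-Lipschitz if there is $\varepsilon>0$ with $d(g(x),g(y))\le d(x,y)$ whenever $d(x,y)<\varepsilon$. $f$ is an eventual similarity if there are $\varepsilon>0$, $s>0$ with $d(f(x),f(y))=s\,d(x,y)$ whenever $d(x,y)<\varepsilon$. Finite shadowing property: for every $\varepsilon>0$ there is $\delta>0$ such that every finite sequence $(x_i)_{i=0}^k$ with $d(f(x_i),x_{i+1})<\delta$ for $0\le i<k$ admits $z$ with $d(f^i(z),x_i)<\varepsilon$ for $0\le i\le k$. *)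

From Stdlib Require Import Reals.
Open Scope R_scope.

Definition is_metric {X : Type} (d : X -> X -> R) : Prop :=
  (forall x y, 0 <= d x y) /\
  (forall x y, d x y = 0 <-> x = y) /\
  (forall x y, d x y = d y x) /\
  (forall x y z, d x z <= d x y + d y z).

Definition is_ultrametric {X : Type} (d : X -> X -> R) : Prop :=
  is_metric d /\ (forall x y z, d x z <= Rmax (d x y) (d y z)).

Definition continuous_on {X : Type} (d : X -> X -> R) (f : X -> X) : Prop :=
  forall x eps, 0 < eps -> exists delta, 0 < delta /\
    forall y, d x y < delta -> d (f x) (f y) < eps.

Definition uniformly_continuous {X : Type} (d : X -> X -> R) (f : X -> X) : Prop :=
  forall eps, 0 < eps -> exists delta, 0 < delta /\
    forall x y, d x y < delta -> d (f x) (f y) < eps.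

Definition eventually_1_Lipschitz {X : Type} (d : X -> X -> R) (g : X -> X) : Prop :=
  exists eps, 0 < eps /\ forall x y, d x y < eps -> d (g x) (g y) <= d x y.

Definition eventual_similarity {X : Type} (d : X -> X -> R) (f : X -> X) : Prop :=
  exists eps s, 0 < eps /\ 0 < s /\
    forall x y, d x y < eps -> d (f x) (f y) = s * d x y.

Definition inverse_of {X : Type} (f g : X -> X) : Prop :=
  (forall x, g (f x) = x) /\ (forall x, f (g x) = x).

Fixpoint iter {X : Type} (n : nat) (f : X -> X) (x : X) : X :=
  match n with O => x | S n' => f (iter n' f x) end.

Definition finite_shadowing {X : Type} (d : X -> X -> R) (f : X -> X) : Prop :=
  forall eps, 0 < eps -> exists delta, 0 < delta /\
    forall (k : nat) (xs : nat -> X),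
      (forall i, (i < k)%nat -> d (f (xs i)) (xs (S i)) < delta) ->
      exists z, forall i, (i <= k)%nat -> d (iter i f z) (xs i) < eps.

(* In an ultrametric space, a map that does not expand small distances keeps
   its true orbit within r of any r-pseudo-orbit: by the strong triangle
   inequality, d(g^(i+1) x_0, x_(i+1)) <= max(d(g^i x_0, x_i), d(g x_i, x_(i+1))).
   So a pseudo-orbit of f is shadowed by the orbit of its first point when f
   is eventually 1-Lipschitz, and by the f-orbit of g^k x_k when the inverse g
   is, because read backwards a pseudo-orbit of f is one of g.  An eventual
   similarity with ratio s <= 1 is eventually 1-Lipschitz; for s > 1 its
   inverse is, on the scale given by the uniform continuity of the inverse. *)

From Stdlib Require Import Reals Lra Lia.
Open Scope R_scope.

Lemma iter_succ_r {X : Type} (f : X -> X) (n : nat) (x : X) :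
  iter (S n) f x = iter n f (f x).
Proof. induction n; simpl in *; [reflexivity | now rewrite <- IHn]. Qed.

Lemma iter_inverse_cancel {X : Type} (f g : X -> X) (i m : nat) (x : X) :
  inverse_of f g -> iter i f (iter (i + m) g x) = iter m g x.
Proof.
  intros [_ Hfg]. induction i as [|i IH]; [reflexivity|].
  rewrite iter_succ_r. simpl. rewrite Hfg. exact IH.
Qed.

Section Ultrametric.

Variables (X : Type) (d : X -> X -> R).
Hypothesis d_ultra : is_ultrametric d.

Lemma ultrametric_ball_trans (x y z : X) (r : R) :
  d x y < r -> d y z < r -> d x z < r.
Proof.
  destruct d_ultra as [_ Hmax]. intros Hxy Hyz.
  eapply Rle_lt_trans; [apply (Hmax x y z) | now apply Rmax_lub_lt].
Qed.

Lemma ultrametric_self_lt (x : X) (r : R) : 0 < r -> d x x < r.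
Proof.
  destruct d_ultra as [[_ [Hid _]] _]. intros Hr.
  now rewrite (proj2 (Hid x x) eq_refl).
Qed.

Lemma pseudo_orbit_tracked_by_orbit (g : X -> X) (e r : R) (k : nat)
    (xs : nat -> X) :
  0 < r -> r <= e ->
  (forall x y, d x y < e -> d (g x) (g y) <= d x y) ->
  (forall i, (i < k)%nat -> d (g (xs i)) (xs (S i)) < r) ->
  forall i, (i <= k)%nat -> d (iter i g (xs O)) (xs i) < r.
Proof.
  intros Hr Hre Hlip Hpseudo i.
  induction i as [|i IH]; intros Hik; simpl; [now apply ultrametric_self_lt|].
  assert (Hi : d (iter i g (xs O)) (xs i) < r) by (apply IH; lia).
  apply ultrametric_ball_trans with (g (xs i)); [|apply Hpseudo; lia].
  eapply Rle_lt_trans; [apply Hlip; lra | exact Hi].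
Qed.

Lemma eventually_1_Lipschitz_finite_shadowing (f : X -> X) :
  eventually_1_Lipschitz d f -> finite_shadowing d f.
Proof.
  intros [e [He Hlip]] eps Heps.
  exists (Rmin eps e). split; [apply Rmin_pos; lra|].
  intros k xs Hpseudo. exists (xs O). intros i Hik.
  eapply Rlt_le_trans; [|apply Rmin_l].
  apply (pseudo_orbit_tracked_by_orbit f e _ k); auto.
  - apply Rmin_pos; lra.
  - apply Rmin_r.
Qed.

Lemma inverse_eventually_1_Lipschitz_finite_shadowing (f g : X -> X) :
  inverse_of f g -> eventually_1_Lipschitz d g -> finite_shadowing d f.
Proof.
  intros Hinv [e [He Hlip]] eps Heps.
  set (delta := Rmin eps e).
  assert (Hdelta : 0 < delta) by (apply Rmin_pos; lra).
  exists delta. split; [exact Hdelta|].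
  intros k xs Hpseudo. exists (iter k g (xs k)).
  assert (Hback : forall j, (j < k)%nat ->
            d (g (xs (k - j)%nat)) (xs (k - S j)%nat) < delta).
  { intros j Hjk.
    destruct d_ultra as [[_ [_ [Hsym _]]] _].
    pose proof (Hpseudo (k - S j)%nat ltac:(lia)) as Hstep.
    replace (S (k - S j)) with (k - j)%nat in Hstep by lia.
    destruct Hinv as [Hgf _].
    rewrite <- (Hgf (xs (k - S j)%nat)).
    assert (Hnear : d (xs (k - j)%nat) (f (xs (k - S j)%nat)) < delta)
      by now rewrite Hsym.
    eapply Rle_lt_trans; [apply Hlip | exact Hnear].
    eapply Rlt_le_trans; [exact Hnear | apply Rmin_r]. }
  assert (Htrack := pseudo_orbit_tracked_by_orbit g e delta k
                      (fun j => xs (k - j)%nat) Hdelta (Rmin_r _ _) Hlip Hback).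
  simpl in Htrack. rewrite Nat.sub_0_r in Htrack.
  intros i Hik.
  replace k with (i + (k - i))%nat at 1 by lia.
  rewrite (iter_inverse_cancel f g _ _ _ Hinv).
  replace i with (k - (k - i))%nat at 2 by lia.
  eapply Rlt_le_trans; [apply Htrack; lia | apply Rmin_l].
Qed.

Lemma eventual_similarity_contracting_1_Lipschitz (f : X -> X) (e s : R) :
  0 < e -> s <= 1 -> (forall x y, d x y < e -> d (f x) (f y) = s * d x y) ->
  eventually_1_Lipschitz d f.
Proof.
  destruct d_ultra as [[Hpos _] _]. intros He Hs1 Hsim.
  exists e. split; [exact He|]. intros x y Hxy.
  rewrite Hsim by exact Hxy. specialize (Hpos x y). nra.
Qed.

Lemma eventual_similarity_expanding_inverse_1_Lipschitz (f g : X -> X) (e s : R) :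
  inverse_of f g -> uniformly_continuous d g ->
  0 < e -> 1 < s -> (forall x y, d x y < e -> d (f x) (f y) = s * d x y) ->
  eventually_1_Lipschitz d g.
Proof.
  destruct d_ultra as [[Hpos _] _]. intros [_ Hfg] Hunif He Hs1 Hsim.
  destruct (Hunif e He) as [delta [Hdelta Hg]].
  exists delta. split; [exact Hdelta|]. intros x y Hxy.
  pose proof (Hsim _ _ (Hg x y Hxy)) as Hscale. rewrite !Hfg in Hscale.
  specialize (Hpos (g x) (g y)). nra.
Qed.

End Ultrametric.

Theorem theorem5p2 (X : Type) (d : X -> X -> R) (f : X -> X) :
  is_ultrametric d ->
  continuous_on d f ->
  (eventually_1_Lipschitz d f \/
   (exists g, inverse_of f g /\ eventually_1_Lipschitz d g) \/
   (exists g, inverse_of f g /\ eventual_similarity d f /\ uniformly_continuous d g)) ->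
  finite_shadowing d f.
Proof.
  intros Hd _ [Hlip | [[g [Hinv Hlip]] | [g [Hinv [[e [s [He [_ Hsim]]]] Hunif]]]]].
  - exact (eventually_1_Lipschitz_finite_shadowing X d Hd f Hlip).
  - exact (inverse_eventually_1_Lipschitz_finite_shadowing X d Hd f g Hinv Hlip).
  - destruct (Rle_dec s 1) as [Hs1 | Hs1].
    + apply (eventually_1_Lipschitz_finite_shadowing X d Hd).
      exact (eventual_similarity_contracting_1_Lipschitz X d Hd f e s He Hs1 Hsim).
    + apply (inverse_eventually_1_Lipschitz_finite_shadowing X d Hd f g Hinv).
      apply (eventual_similarity_expanding_inverse_1_Lipschitz X d Hd f g e s);
        auto; lra.
Qed.
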